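(* Let $\mathcal{H}$ be an infinite dimensional complex Hilbert space and let $\phi:\mathcal{B}(\mathcal{H})\to\mathcal{B}(\mathcal{H})$ be a bijective map preserving the Douglas solution in both directions. Then $\phi$ preserves range inclusion in both directions: for all $A,B\in\mathcal{B}(\mathcal{H})$, $\operatorname{ran}A\subseteq\operatorname{ran}B$ if and only if $\operatorname{ran}\phi(A)\subseteq\operatorname{ran}\phi(B)$. Moreover, for every $B\in\mathcal{B}(\mathcal{H})$ of rank one, $\phi(B)$ is of rank one, and the assignment $\operatorname{ran}A\mapsto\operatorname{ran}\phi(A)$ is a well-defined map which restricts to a bijection of the set of one-dimensional subspaces $\{\mathbb{C}e: e\in\mathcal{H}, e\neq0\}$ onto itself.
   Context: $\mathcal{B}(\mathcal{H})$ denotes the algebra of all bounded linear operators on $\mathcal{H}$. For $A,B\in\mathcal{B}(\mathcal{H})$ with $\operatorname{ran}A\subseteq\operatorname{ran}B$, the Douglas solution of $A=BX$ is the unique $D\in\mathcal{B}(\mathcal{H})$ with $BD=A$ and $\operatorname{ran}D\subseteq(\ker B)^\perp$ (it exists exactly when $\operatorname{ran}A\subseteq\operatorname{ran}B$). A map $\phi:\mathcal{B}(\mathcal{H})\to\mathcal{B}(\mathcal{H})$ preserves the Douglas solution in both directions if for all $A,B,X\in\mathcal{B}(\mathcal{H})$: $X$ is the Douglas solution of $A=BX$ if and only if $\phi(X)$ is the Douglas solution of $\phi(A)=\phi(B)Y$. *)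

(* A complex Hilbert space is encoded as an
   lmodType over R[i] together with an inner product satisfying the Hilbert
   space axioms (including completeness w.r.t. the induced norm). *)
From mathcomp Require Import all_boot all_algebra.
From mathcomp Require Import complex.
From mathcomp Require Import reals.
Set Implicit Arguments. Unset Strict Implicit. Unset Printing Implicit Defensive.
Import GRing.Theory Num.Theory.
Local Open Scope ring_scope.

Section Hilbert.
Variables (R : realType) (V : lmodType R[i]) (ip : V -> V -> R[i]).

Definition is_inner_product : Prop :=
  [/\ forall (a : R[i]) (x y z : V), ip (a *: x + y) z = a * ip x z + ip y z,
      forall x y : V, ip x y = (ip y x)^*,
      forall x : V, 0 <= ip x x
    & forall x : V, ip x x = 0 -> x = 0].

Definition nsq (x : V) : R[i] := ip x x.

Definition cauchy_seq (u : nat -> V) : Prop :=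
  forall e : R[i], 0 < e -> exists N : nat, forall m n : nat,
    (N <= m)%N -> (N <= n)%N -> nsq (u m - u n) < e.

Definition converges_to (u : nat -> V) (l : V) : Prop :=
  forall e : R[i], 0 < e -> exists N : nat, forall n : nat,
    (N <= n)%N -> nsq (u n - l) < e.

Definition complete_ip : Prop :=
  forall u : nat -> V, cauchy_seq u -> exists l : V, converges_to u l.

Definition infinite_dimensional : Prop :=
  forall n : nat, exists v : 'I_n -> V,
    forall c : 'I_n -> R[i], \sum_(i < n) c i *: v i = 0 -> forall i, c i = 0.

Definition is_hilbert_space : Prop :=
  [/\ is_inner_product, complete_ip & infinite_dimensional].

Definition is_bounded_linear (T : V -> V) : Prop :=
  (forall (a : R[i]) (x y : V), T (a *: x + y) = a *: T x + T y) /\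
  exists M : R[i], 0 <= M /\ forall x : V, nsq (T x) <= M * nsq x.

Definition BH : Type := { T : V -> V | is_bounded_linear T }.

Definition op (A : BH) : V -> V := proj1_sig A.

Definition ran (A : BH) : V -> Prop := fun y => exists x : V, op A x = y.

Definition ran_sub (A B : BH) : Prop := forall y, ran A y -> ran B y.

Definition same_set (P Q : V -> Prop) : Prop := forall y, P y <-> Q y.

(* X is the Douglas solution of A = B X : B X = A and ran X ⊆ (ker B)^⊥ *)
Definition douglas_solution (A B X : BH) : Prop :=
  (forall x : V, op B (op X x) = op A x) /\
  (forall x y : V, op B y = 0 -> ip (op X x) y = 0).

Definition preserves_douglas_both (phi : BH -> BH) : Prop :=
  forall A B X : BH, douglas_solution A B X <-> douglas_solution (phi A) (phi B) (phi X).

Definition is_line (L : V -> Prop) : Prop :=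
  exists e : V, e <> 0 /\ forall y, L y <-> exists c : R[i], y = c *: e.

Definition rank_one (A : BH) : Prop := is_line (ran A).

(* the induced assignment ran A |-> ran phi(A) sends L to L' *)
Definition maps_subspace (phi : BH -> BH) (L L' : V -> Prop) : Prop :=
  (exists A : BH, same_set (ran A) L) /\
  (forall A : BH, same_set (ran A) L -> same_set (ran (phi A)) L').

End Hilbert.

(* Write [A <~ B] when [A = B X] has a Douglas solution.  The proof rests on
   a single analytic fact, the projection theorem for the (closed) kernel of a
   bounded operator: every [x0] splits as [k + x1] with [B k = 0] and [x1]
   orthogonal to [ker B].  It yields the key lemma [solvable_of_line]: if
   [ran S] lies in a line [C e] with [e] in [ran B], then [S <~ B], solved by
   [X v = f v *: x1] where [S v = f v *: e] and [B x1 = e].  Consequently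
   - [A <~ B] for all [B] exactly when [A = 0] (the bottom of the preorder),
   - the atoms of the preorder are exactly the rank-one operators, and
   - [ran A] is contained in [ran B] iff every atom below [A] is below [B].
   A bijection preserving [<~] in both directions preserves bottom and atoms,
   hence range inclusion and rank one; the statements about lines follow
   since every line is the range of a rank-one operator. *)

From mathcomp Require Import all_boot all_order all_algebra.
From mathcomp Require Import complex reals.
From mathcomp Require boolp.
From mathcomp Require Import ring lra.
Import Order.TTheory GRing.Theory Num.Theory.
Set Implicit Arguments. Unset Strict Implicit. Unset Printing Implicit Defensive.
Local Open Scope ring_scope.

(* real and imaginary parts of a complex number (not the algebraic [Num.Re]) *)
Local Notation Re := complex.Re.
Local Notation Im := complex.Im.

Section ComplexParts.
Variable R : realType.
Implicit Types (x y : R[i]) (t : R).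

Lemma ReD x y : Re (x + y) = Re x + Re y.
Proof. by case: x => a b; case: y. Qed.

Lemma ReN x : Re (- x) = - Re x.
Proof. by case: x. Qed.

Lemma ReJ x : Re x^* = Re x.
Proof. by case: x. Qed.

Lemma Re_realM t y : Re ((t%:C)%C * y) = t * Re y.
Proof. by case: y => a b /=; rewrite mul0r subr0. Qed.

Lemma Re_iM y : Re ('i%C * y) = - Im y.
Proof. by case: y => a b /=; lra. Qed.

Lemma complex_eq0 y : Re y = 0 -> Im y = 0 -> y = 0.
Proof. by case: y => a b /= -> ->. Qed.

Lemma ge0_complex_real y : 0 <= y -> y = ((Re y)%:C)%C.
Proof. by move=> /ger0_Im; case: y => a b /= ->. Qed.

End ComplexParts.

Section RealFacts.
Context {R : realType}.

Definition eps (n : nat) : R := (n.+1%:R)^-1.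

Lemma eps_gt0 n : 0 < eps n :> R.
Proof. by rewrite /eps invr_gt0 ltr0Sn. Qed.

Lemma eps_le1 n : eps n <= 1 :> R.
Proof. by rewrite /eps invf_le1 ?ltr0Sn // ler1n. Qed.

Lemma eps_mono m n : (m <= n)%N -> eps n <= eps m :> R.
Proof. by move=> h; rewrite /eps lef_pV2 ?posrE ?ltr0Sn // ler_nat ltnS. Qed.

Lemma eps_small (e : R) : 0 < e -> exists n, eps n < e.
Proof. by move=> /ltr_add_invr [k hk]; exists k; move: hk; rewrite add0r. Qed.

Lemma quadratic_ge0 (p n : R) : 0 <= n -> (forall t, 0 <= t * t * n + 2 * t * p) -> p = 0.
Proof.
move=> n0 h; pose s := n + 1; have s0 : 0 < s by rewrite /s; lra.
have := h (- p / s).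
have -> : - p / s * (- p / s) * n + 2 * (- p / s) * p = - (p * p) * (n + 2) / (s * s).
  by rewrite /s; field; rewrite gt_eqF // -/s.
rewrite pmulr_lge0 ?invr_gt0 ?mulr_gt0 //; nra.
Qed.

End RealFacts.

Section InnerProduct.
Variables (R : realType) (V : lmodType R[i]) (ip : V -> V -> R[i]).
Hypothesis hI : is_inner_product ip.
Implicit Types (x y z : V) (a : R[i]) (t : R).

Lemma ipDZl a x y z : ip (a *: x + y) z = a * ip x z + ip y z.
Proof. by case: hI => h _ _ _; apply: h. Qed.

Lemma ipC x y : ip x y = (ip y x)^*.
Proof. by case: hI => _ h _ _; apply: h. Qed.

Lemma ip_ge0 x : 0 <= ip x x.
Proof. by case: hI => _ _ h _; apply: h. Qed.

Lemma ip_eq0 x : ip x x = 0 -> x = 0.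
Proof. by case: hI => _ _ _ h; apply: h. Qed.

Lemma ip0l z : ip 0 z = 0.
Proof.
have := ipDZl 1 0 0 z; rewrite scaler0 addr0 mul1r.
by rewrite -{1}(addr0 (ip 0 z)) => /addrI ->.
Qed.

Lemma ipDl x y z : ip (x + y) z = ip x z + ip y z.
Proof. by rewrite -[x]scale1r ipDZl mul1r scale1r. Qed.

Lemma ipZl a x z : ip (a *: x) z = a * ip x z.
Proof. by rewrite -[a *: x]addr0 ipDZl ip0l addr0. Qed.

Lemma ipNl x z : ip (- x) z = - ip x z.
Proof. by rewrite -scaleN1r ipZl mulN1r. Qed.

Lemma ipZr a x z : ip z (a *: x) = a^* * ip z x.
Proof. by rewrite ipC ipZl rmorphM [ip z x]ipC. Qed.

Lemma ip0r z : ip z 0 = 0.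
Proof. by rewrite ipC ip0l rmorph0. Qed.

Lemma ip_self_neq0 x : x != 0 -> ip x x != 0.
Proof. by apply: contra => /eqP /ip_eq0 ->. Qed.

(* The squared norm and the real part of the inner product, as reals: the
   metric arguments below are carried out in the ordered field [R]. *)
Definition sqn x : R := Re (ip x x).
Definition rip x y : R := Re (ip x y).

Lemma ip_selfE x : ip x x = ((sqn x)%:C)%C.
Proof. exact: ge0_complex_real (ip_ge0 x). Qed.

Lemma sqn_ge0 x : 0 <= sqn x.
Proof. by rewrite -lecR -ip_selfE ip_ge0. Qed.

Lemma sqn_eq0 x : sqn x = 0 -> x = 0.
Proof. by move=> h; apply: ip_eq0; rewrite ip_selfE h. Qed.

Lemma sqn_gt0 x : x != 0 -> 0 < sqn x.
Proof. by move=> xn0; rewrite lt0r sqn_ge0 andbT; apply: contra xn0 => /eqP /sqn_eq0 ->. Qed.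

Lemma ripC x y : rip x y = rip y x.
Proof. by rewrite /rip ipC ReJ. Qed.

Lemma ripDl x y z : rip (x + y) z = rip x z + rip y z.
Proof. by rewrite /rip ipDl ReD. Qed.

Lemma ripNl x z : rip (- x) z = - rip x z.
Proof. by rewrite /rip ipNl ReN. Qed.

Lemma ripZl t x z : rip ((t%:C)%C *: x) z = t * rip x z.
Proof. by rewrite /rip ipZl Re_realM. Qed.

Lemma ripDr x y z : rip z (x + y) = rip z x + rip z y.
Proof. by rewrite ripC ripDl !(ripC z). Qed.

Lemma ripNr x z : rip z (- x) = - rip z x.
Proof. by rewrite ripC ripNl ripC. Qed.

Lemma ripZr t x z : rip z ((t%:C)%C *: x) = t * rip z x.
Proof. by rewrite ripC ripZl ripC. Qed.

Lemma sqnD x y : sqn (x + y) = sqn x + sqn y + 2 * rip x y.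
Proof. by rewrite /sqn -!/(rip _ _) ripDl !ripDr (ripC y x); ring. Qed.

Lemma sqnN x : sqn (- x) = sqn x.
Proof. by rewrite /sqn -!/(rip _ _) ripNl ripNr opprK. Qed.

Lemma sqnB x y : sqn (x - y) = sqn x + sqn y - 2 * rip x y.
Proof. by rewrite sqnD sqnN ripNr; ring. Qed.

Lemma sqnZ t x : sqn ((t%:C)%C *: x) = t * t * sqn x.
Proof. by rewrite /sqn -!/(rip _ _) ripZl ripZr mulrA. Qed.

Lemma sqnZc a x : sqn (a *: x) = Re (a * a^*) * sqn x.
Proof. by rewrite /sqn ipZl ipZr mulrA ip_selfE mulrC Re_realM mulrC. Qed.

Lemma parallelogram x y : sqn (y - x) + sqn (x + y) = 2 * sqn x + 2 * sqn y.
Proof. by rewrite sqnB sqnD (ripC y x); ring. Qed.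

(* weighted Cauchy-Schwarz: expand [sqn (d x - y) >= 0] *)
Lemma rip_le x y (d : R) : 0 < d -> 2 * rip x y <= d * sqn x + sqn y / d.
Proof.
move=> d0; have := sqn_ge0 ((d%:C)%C *: x - y).
rewrite sqnB sqnZ ripZl => h.
rewrite -subr_ge0.
have -> : d * sqn x + sqn y / d - 2 * rip x y
  = (d * d * sqn x + sqn y - 2 * (d * rip x y)) / d by field; rewrite gt_eqF.
by rewrite divr_ge0 // ltW.
Qed.

Lemma ip_eq0_rip x y : rip x y = 0 -> rip x (- 'i%C *: y) = 0 -> ip x y = 0.
Proof.
move=> hRe; rewrite /rip ipZr.
have -> : (- 'i%C)^* = 'i%C :> R[i] by apply/eqP; rewrite eq_complex /= oppr0 opprK !eqxx.
by rewrite Re_iM => /eqP; rewrite oppr_eq0 => /eqP; apply: complex_eq0.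
Qed.

Lemma sqnD_le x y (d : R) : 0 < d -> sqn (x + y) <= (1 + d) * sqn x + (1 + d^-1) * sqn y.
Proof. by move=> d0; have := rip_le x y d0; rewrite sqnD mulrC; lra. Qed.

(* Cauchy-Schwarz [|<v, w>|^2 <= |v|^2 |w|^2]: apply [rip_le] to [<v, w> w]
   with weight [d = |w|^2] *)
Lemma cauchy_schwarz v w : Re (ip v w * (ip v w)^*) <= sqn v * sqn w.
Proof.
have [->|wn0] := eqVneq w 0; first by rewrite ip0r mul0r /sqn ip0l mulr0.
set q := Re _; have Nw := sqn_gt0 wn0.
have := rip_le v (ip v w *: w) Nw.
rewrite sqnZc /rip ipZr [_^* * _]mulrC -/q mulfK ?gt_eqF // => h.
have := sqn_ge0 v; nra.
Qed.

End InnerProduct.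

Section BoundedOperators.
Variables (R : realType) (V : lmodType R[i]) (ip : V -> V -> R[i]).
Hypothesis hI : is_inner_product ip.
Local Notation sqn := (sqn ip).
Local Notation BH := (BH ip).

Lemma bounded_of_real (T : V -> V) (m : R) :
  0 <= m -> (forall x, sqn (T x) <= m * sqn x) ->
  exists M : R[i], 0 <= M /\ forall x, nsq ip (T x) <= M * nsq ip x.
Proof.
move=> m0 hm; exists ((m%:C)%C); split; first by rewrite ler0c.
by move=> x; rewrite /nsq !(ip_selfE hI) -rmorphM lecR.
Qed.

Lemma op_bound (A : BH) : exists m : R, 0 <= m /\ forall x, sqn (op A x) <= m * sqn x.
Proof.
case: A => T [_ [M [M0 hM]]] /=; rewrite (ge0_complex_real M0) in hM.
exists (Re M); split; first by rewrite -ler0c -ge0_complex_real.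
by move=> x; have := hM x; rewrite /nsq !(ip_selfE hI) -rmorphM lecR.
Qed.

Lemma opL (A : BH) a x y : op A (a *: x + y) = a *: op A x + op A y.
Proof. by case: A => T [h _] /=. Qed.

Lemma op0 (A : BH) : op A 0 = 0.
Proof.
have := opL A 1 0 0; rewrite scaler0 addr0 scale1r.
by rewrite -{1}(addr0 (op A 0)) => /addrI.
Qed.

Lemma opD (A : BH) x y : op A (x + y) = op A x + op A y.
Proof. by rewrite -[x]scale1r opL !scale1r. Qed.

Lemma opZ (A : BH) a x : op A (a *: x) = a *: op A x.
Proof. by rewrite -[a *: x]addr0 opL op0 addr0. Qed.

Lemma opN (A : BH) x : op A (- x) = - op A x.
Proof. by rewrite -scaleN1r opZ scaleN1r. Qed.

Lemma opB (A : BH) x y : op A (x - y) = op A x - op A y.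
Proof. by rewrite opD opN. Qed.

Lemma zero_op_bounded : is_bounded_linear ip (fun _ : V => 0).
Proof.
split; first by move=> a x y; rewrite scaler0 addr0.
by apply: (@bounded_of_real _ 0) => // x; rewrite mul0r /sqn ip0l.
Qed.

Definition zero_op : BH := exist _ _ zero_op_bounded.

Lemma rank_one_op_bounded (y w : V) : is_bounded_linear ip (fun v => ip v w *: y).
Proof.
split; first by move=> a x z; rewrite (ipDZl hI) scalerDl scalerA.
apply: (@bounded_of_real _ (sqn w * sqn y)); first by rewrite mulr_ge0 // sqn_ge0.
move=> x; rewrite (sqnZc hI).
have := cauchy_schwarz hI x w; have := sqn_ge0 hI y.
have := sqn_ge0 hI x; have := sqn_ge0 hI w; nra.
Qed.

Definition rank_one_op (y w : V) : BH := exist _ _ (rank_one_op_bounded y w).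

Lemma rank_one_opE y w v : op (rank_one_op y w) v = ip v w *: y.
Proof. by []. Qed.

Lemma rank_one_op_ran y w z : w != 0 -> (ran (rank_one_op y w) z <-> exists c, z = c *: y).
Proof.
move=> wn0; split; first by move=> [v <-]; exists (ip v w).
move=> [c ->]; exists ((c / ip w w) *: w).
by rewrite rank_one_opE (ipZl hI) divfK // ip_self_neq0.
Qed.

Lemma rank_one_op_rank_one y w : y != 0 -> w != 0 -> rank_one (rank_one_op y w).
Proof. by move=> yn0 wn0; exists y; split; [exact/eqP | move=> z; apply: rank_one_op_ran]. Qed.

End BoundedOperators.

Section Limits.
Variables (R : realType) (V : lmodType R[i]) (ip : V -> V -> R[i]).
Hypothesis hI : is_inner_product ip.
Local Notation sqn := (sqn ip).

Lemma converges_real (u : nat -> V) l : converges_to ip u l ->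
  forall e : R, 0 < e -> exists n0, forall n, (n0 <= n)%N -> sqn (u n - l) < e.
Proof.
move=> h e e0; have /h [n0 hn0] : 0 < (e%:C)%C by rewrite ltcR.
by exists n0 => n /hn0; rewrite /nsq (ip_selfE hI) ltcR.
Qed.

Lemma cauchy_real (u : nat -> V) :
  (forall e : R, 0 < e -> exists n0, forall m n,
     (n0 <= m)%N -> (n0 <= n)%N -> sqn (u m - u n) < e) ->
  cauchy_seq ip u.
Proof.
move=> h e e0; have e_real := ge0_complex_real (ltW e0).
have [n0 hn0] : exists n0, forall m n, (n0 <= m)%N -> (n0 <= n)%N -> sqn (u m - u n) < Re e.
  by apply: h; rewrite -ltcR -e_real.
rewrite e_real.
by exists n0 => m n hm hn; rewrite /nsq (ip_selfE hI) ltcR; apply: hn0.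
Qed.

Lemma kernel_closed (B : BH ip) (u : nat -> V) l :
  (forall n, op B (u n) = 0) -> converges_to ip u l -> op B l = 0.
Proof.
move=> hu /converges_real ul; have [m [m0 hm]] := op_bound hI B.
apply: (sqn_eq0 hI); apply/eqP; rewrite eq_le sqn_ge0 // andbT.
apply/ler_addgt0Pr => e e0; rewrite add0r.
have [n0 hn0] := ul (e / (m + 1)) (divr_gt0 e0 (ltr_wpDl m0 ltr01)).
have := hm (u n0 - l); rewrite opB hu sub0r sqnN //.
have := hn0 n0 (leqnn n0); have := sqn_ge0 hI (u n0 - l).
have : m * (e / (m + 1)) <= e by rewrite mulrA ler_pdivrMr; nra.
nra.
Qed.

Lemma sqn_limit_le x0 (u : nat -> V) l (d : R) : 0 <= d -> converges_to ip u l ->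
  (forall n, sqn (x0 - u n) < d + eps n) -> sqn (x0 - l) <= d.
Proof.
move=> d0 /converges_real ul hu; apply/ler_addgt0Pr => e e0.
pose del := e / (3 * (d + 1)).
have del0 : 0 < del by rewrite divr_gt0 // mulr_gt0 //; lra.
pose et := e / 3 * (del / (1 + del)).
have et0 : 0 < et by rewrite !mulr_gt0 ?invr_gt0 //; lra.
have [n1 hn1] : exists n, eps n < e / 3 by apply: eps_small; rewrite divr_gt0.
have [n2 hn2] := ul et et0.
pose n := maxn n1 n2.
have hb := hn2 n (leq_maxr n1 n2).
have hen : eps n <= eps n1 :> R := eps_mono (leq_maxl n1 n2).
have hD := sqnD_le hI (x0 - u n) (u n - l) del0.
rewrite addrA subrK in hD.
have ha : (1 + del) * sqn (x0 - u n) <= (1 + del) * (d + eps n).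
  by rewrite ler_wpM2l ?ltW ?hu //; lra.
have hb' : (1 + del^-1) * sqn (u n - l) <= (1 + del^-1) * et.
  have idel : 0 < del^-1 by rewrite invr_gt0.
  by rewrite ler_wpM2l ?ltW //; lra.
have het : (1 + del^-1) * et = e / 3.
  by rewrite /et; field; rewrite ?gt_eqF // ?ltr_wpDr // ltW.
have edel : del * (d + 1) = e / 3 by rewrite /del; field; lra.
have hdel : del * eps n <= del by apply: ler_piMr; [exact: ltW | exact: eps_le1].
have : (1 + del) * (d + eps n) = d + eps n + del * (d + 1) + del * eps n - del by ring.
have : e = 3 * (e / 3) by field.
lra.
Qed.

End Limits.

Section Projection.
Variables (R : realType) (V : lmodType R[i]) (ip : V -> V -> R[i]).
Hypothesis hI : is_inner_product ip.
Hypothesis hC : complete_ip ip.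
Local Notation sqn := (sqn ip).

Variable K : V -> Prop.
Hypothesis K0 : K 0.
Hypothesis KD : forall x y, K x -> K y -> K (x + y).
Hypothesis KZ : forall (a : R[i]) x, K x -> K (a *: x).
Hypothesis Kclosed : forall u l, (forall n, K (u n)) -> converges_to ip u l -> K l.

Lemma KB x y : K x -> K y -> K (x - y).
Proof. by move=> hx hy; rewrite -scaleN1r; apply: KD => //; apply: KZ. Qed.

(* a sequence in [K] whose distances to [x0] approach a lower bound [d]
   of all such distances is Cauchy, by the parallelogram law *)
Lemma minimizing_cauchy x0 (d : R) (u : nat -> V) :
  (forall k, K k -> d <= sqn (x0 - k)) -> (forall n, K (u n)) ->
  (forall n, sqn (x0 - u n) < d + eps n) -> cauchy_seq ip u.
Proof.
move=> hd Ku hu.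
have par m n : sqn (u m - u n) <= 2 * eps m + 2 * eps n.
  pose a := x0 - u m; pose b := x0 - u n; pose h := (((2^-1 : R)%:C)%C).
  have Kmid : K (h *: (u m + u n)) by apply/KZ/KD.
  have emid : x0 - h *: (u m + u n) = h *: (a + b).
    have half2 : h *: (x0 + x0) = x0.
      have e2 : (2^-1 + 2^-1 : R) = 1 by field.
      by rewrite scalerDr -scalerDl -rmorphD e2 rmorph1 scale1r.
    by rewrite /a /b addrACA -opprD [RHS]scalerDr scalerN half2.
  have := hd _ Kmid; rewrite emid sqnZ //.
  have -> : u m - u n = b - a by rewrite /a /b opprB [RHS]addrC addrA subrK.
  have := parallelogram hI a b; have := hu m; have := hu n.
  have -> : (2^-1 : R) * 2^-1 = 4^-1 by field.
  rewrite -/a -/b; lra.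
apply: cauchy_real => // e e0.
have [n0 hn0] : exists n0, eps n0 < e / 4 by apply: eps_small; rewrite divr_gt0.
exists n0 => m n hm hn.
have em : eps m <= eps n0 :> R := eps_mono hm.
have en : eps n <= eps n0 :> R := eps_mono hn.
have := par m n; have : e = 4 * (e / 4) by field.
lra.
Qed.


(* a best approximation of [x0] in [K] leaves a residual orthogonal to [K]:
   otherwise moving along a direction of [K] would decrease the distance *)
Lemma best_approximation_orthogonal x0 k :
  K k -> (forall k', K k' -> sqn (x0 - k) <= sqn (x0 - k')) ->
  forall z, K z -> ip (x0 - k) z = 0.
Proof.
move=> Kk hmin.
have rip0 z : K z -> rip ip (x0 - k) z = 0.
  move=> Kz; apply: (quadratic_ge0 (sqn_ge0 hI z)) => t.
  have := hmin (k - (t%:C)%C *: z) (KB Kk (KZ _ Kz)).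
  have -> : x0 - (k - (t%:C)%C *: z) = (x0 - k) + (t%:C)%C *: z.
    by rewrite opprB addrCA addrC.
  rewrite (sqnD hI (x0 - k)) sqnZ // ripZr //; lra.
by move=> z Kz; apply: (ip_eq0_rip hI); apply: rip0 => //; apply: KZ.
Qed.

(* projection theorem: the infimum of the distances from [x0] to [K] is
   attained, along a minimizing sequence, at some [k] with [x0 - k] orthogonal to [K] *)
Lemma orthogonal_decomposition x0 : exists k, K k /\ forall z, K z -> ip (x0 - k) z = 0.
Proof.
pose S : classical_sets.set R := fun r => exists2 k, K k & r = sqn (x0 - k).
have Sne : classical_sets.nonempty S by exists (sqn (x0 - 0)), 0.
have Slb : classical_sets.has_lbound S by exists 0 => r [k _ ->]; apply: sqn_ge0.
pose d := inf S.
have hd k : K k -> d <= sqn (x0 - k) by move=> Kk; apply: ge_inf => //; exists k.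
have d0 : 0 <= d by apply: lb_le_inf => // r [k _ ->]; apply: sqn_ge0.
have approx n : exists k, K k /\ sqn (x0 - k) < d + eps n.
  have : inf S < d + eps n by rewrite ltrDl eps_gt0.
  by move=> /(inf_lt Sne) [r [k Kk ->] hr]; exists k.
have [u hu] := boolp.choice approx.
have Ku n : K (u n) by case: (hu n).
have hud n : sqn (x0 - u n) < d + eps n by case: (hu n).
have [k uk] := hC (minimizing_cauchy hd Ku hud).
have Kk : K k := Kclosed Ku uk.
exists k; split => //; apply: best_approximation_orthogonal => // k' Kk'.
exact: le_trans (sqn_limit_le hI d0 uk hud) (hd _ Kk').
Qed.

End Projection.

Lemma kernel_decomposition (R : realType) (V : lmodType R[i]) (ip : V -> V -> R[i])
  (hI : is_inner_product ip) (hC : complete_ip ip) (B : BH ip) (x0 : V) :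
  exists k, op B k = 0 /\ forall z, op B z = 0 -> ip (x0 - k) z = 0.
Proof.
apply: (orthogonal_decomposition hI hC (K := fun v => op B v = 0)).
- exact: op0.
- by move=> x y /= hx hy; rewrite opD hx hy addr0.
- by move=> a x /= hx; rewrite opZ hx scaler0.
- exact: kernel_closed.
Qed.

Section DouglasPreorder.
Variables (R : realType) (V : lmodType R[i]) (ip : V -> V -> R[i]).
Hypothesis hI : is_inner_product ip.
Hypothesis hC : complete_ip ip.
Local Notation sqn := (sqn ip).
Local Notation BH := (BH ip).

Definition douglas_solvable (A B : BH) : Prop := exists X, douglas_solution A B X.

Definition douglas_bottom (A : BH) : Prop := forall B, douglas_solvable A B.

Definition douglas_atom (A : BH) : Prop :=
  ~ douglas_bottom A /\
  forall S, douglas_solvable S A -> douglas_bottom S \/ douglas_solvable A S.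

Lemma solvable_ran_sub A B : douglas_solvable A B -> ran_sub A B.
Proof. by move=> [X [hX _]] y [x <-]; exists (op X x). Qed.

Lemma douglas_bottomP A : douglas_bottom A <-> forall x, op A x = 0.
Proof.
split; first by move=> /(_ (zero_op hI)) [X [hX _]] x; rewrite -hX.
move=> h B; exists (zero_op hI); split => /= [x|x y _]; first by rewrite h op0.
by rewrite ip0l.
Qed.

Lemma scale_injl (c c' : R[i]) (e : V) : e != 0 -> c *: e = c' *: e -> c = c'.
Proof.
move=> en0 /eqP; rewrite -subr_eq0 -scalerBl scaler_eq0 (negbTE en0) orbF subr_eq0.
by move/eqP.
Qed.

Lemma line_coefficient_transfer (S : BH) (e x1 : V) :
  e != 0 -> (forall v, exists c, op S v = c *: e) ->
  exists X : BH, forall v, exists c, op S v = c *: e /\ op X v = c *: x1.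
Proof.
move=> en0 hS; have [f hf] := boolp.choice hS.
have f_lin a u w : f (a *: u + w) = a * f u + f w.
  by apply: (scale_injl en0); rewrite -hf opL !hf scalerDl scalerA.
have [m [m0 hm]] := op_bound hI S.
have e0 : 0 < sqn e := sqn_gt0 hI en0.
have f_bound v : Re (f v * (f v)^*) <= m * sqn v / sqn e.
  by rewrite ler_pdivlMr // -(sqnZc hI) -hf.
have Xb : is_bounded_linear ip (fun v => f v *: x1).
  split; first by move=> a u w; rewrite f_lin scalerDl scalerA.
  apply: (bounded_of_real hI (m := m * sqn x1 / sqn e)).
    by rewrite mulr_ge0 ?invr_ge0 ?mulr_ge0 ?sqn_ge0 // ltW.
  move=> v; rewrite (sqnZc hI).
  have -> : m * sqn x1 / sqn e * sqn v = m * sqn v / sqn e * sqn x1 by ring.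
  by apply: ler_wpM2r; [exact: sqn_ge0 | exact: f_bound].
by exists (exist _ _ Xb) => v; exists (f v); split.
Qed.

(* key lemma: if [ran S] lies in a line [C e] with [e] in [ran B], then
   [S = B X] has a Douglas solution, namely [X v = f v *: x1] where [x1]
   is the preimage of [e] orthogonal to [ker B] *)
Lemma solvable_of_line (S B : BH) (e : V) :
  (forall v, exists c, op S v = c *: e) -> ran B e -> douglas_solvable S B.
Proof.
move=> hS [x0 Bx0].
have [e0|en0] := eqVneq e 0.
  suff : douglas_bottom S by apply.
  by apply/douglas_bottomP => v; have [c ->] := hS v; rewrite e0 scaler0.
have [k [Bk hk]] := kernel_decomposition hI hC B x0.
have Bx1 : op B (x0 - k) = e by rewrite opB Bk subr0.
have [X hX] := line_coefficient_transfer (x0 - k) en0 hS.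
exists X; split=> [v|v y By]; have [c [Sv Xv]] := hX v.
  by rewrite Xv opZ Bx1 Sv.
by rewrite Xv (ipZl hI) hk // mulr0.
Qed.

(* a rank-one operator is an atom: anything solvable against it has range
   in its line, so it is either zero or solvable the other way round *)
Lemma rank_one_atom A : rank_one A -> douglas_atom A.
Proof.
move=> [e [en0 he]].
have heA : ran A e by apply/he; exists 1; rewrite scale1r.
split.
  by move=> /douglas_bottomP hA; case: heA => x hx; apply: en0; rewrite -hx hA.
move=> S hSA; case: (boolp.pselect (forall v, op S v = 0)) => [|/boolp.existsNP [v0 Sv0]].
  by move=> /douglas_bottomP; left.
right; have [c0 hc0] : exists c, op S v0 = c *: e.
  by apply/he; apply: (solvable_ran_sub hSA); exists v0.
have c0n : c0 != 0 by apply: contraPneq Sv0 => c00; rewrite hc0 c00 scale0r.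
apply: (@solvable_of_line _ _ e); first by move=> v; apply/he; exists v.
by exists (c0^-1 *: v0); rewrite opZ hc0 scalerA mulVf // scale1r.
Qed.

(* an atom [A] is rank one: it lies above the nonzero rank-one operator
   [v |-> <v, x> A x], so minimality forces [ran A] into that line *)
Lemma atom_rank_one A : douglas_atom A -> rank_one A.
Proof.
move=> [/douglas_bottomP /boolp.existsNP [x Ax] hA].
have xn0 : x != 0 by apply: contraPneq Ax => ->; rewrite op0.
have yn0 : op A x != 0 by apply/eqP.
pose S := rank_one_op hI (op A x) x.
have hSA : douglas_solvable S A.
  by apply: (@solvable_of_line _ _ (op A x)); [move=> v; exists (ip v x) | exists x].
have nzS : ~ douglas_bottom S.
  move=> /douglas_bottomP /(_ x) /eqP; rewrite rank_one_opE scaler_eq0.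
  by rewrite (negbTE (ip_self_neq0 hI xn0)) (negbTE yn0).
case: (hA S hSA) => // /solvable_ran_sub hAS.
exists (op A x); split => // z; split; first by move=> /hAS /rank_one_op_ran; apply.
by move=> [c ->]; exists (c *: x); rewrite opZ.
Qed.

Lemma ran_sub_atoms A B :
  ran_sub A B <-> forall Q, douglas_atom Q -> douglas_solvable Q A -> douglas_solvable Q B.
Proof.
split=> [hAB Q /atom_rank_one [e [_ he]] /solvable_ran_sub hQA | h z [x <-]].
  apply: (@solvable_of_line _ _ e); first by move=> v; apply/he; exists v.
  by apply/hAB/hQA/he; exists 1; rewrite scale1r.
have [->|yn0] := eqVneq (op A x) 0; first by exists 0; rewrite op0.
have xn0 : x != 0 by apply: contraNneq yn0 => ->; rewrite op0.
pose Q := rank_one_op hI (op A x) x.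
have hQA : douglas_solvable Q A.
  by apply: (@solvable_of_line _ _ (op A x)); [move=> v; exists (ip v x) | exists x].
apply: (solvable_ran_sub (h Q _ hQA)); first exact/rank_one_atom/rank_one_op_rank_one.
by apply/rank_one_op_ran => //; exists 1; rewrite scale1r.
Qed.

End DouglasPreorder.

Section RangeSets.
Variables (R : realType) (V : lmodType R[i]) (ip : V -> V -> R[i]).
Hypothesis hI : is_inner_product ip.

Lemma same_set_sym (P Q : V -> Prop) : same_set P Q -> same_set Q P.
Proof. by move=> h y; rewrite h. Qed.

Lemma same_set_trans (P Q S : V -> Prop) : same_set P Q -> same_set Q S -> same_set P S.
Proof. by move=> h1 h2 y; rewrite h1 h2. Qed.

Lemma same_ran_sub (A B : BH ip) : same_set (ran A) (ran B) <-> ran_sub A B /\ ran_sub B A.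
Proof. by split=> [h | [hAB hBA] y]; [split=> y /h | split; [apply: hAB | apply: hBA]]. Qed.

Lemma line_is_range (L : V -> Prop) :
  is_line L -> exists A : BH ip, same_set (ran A) L /\ rank_one A.
Proof.
move=> [e [/eqP en0 he]]; exists (rank_one_op hI e e).
split; last exact: rank_one_op_rank_one.
by move=> y; rewrite (rank_one_op_ran hI _ _ en0) he.
Qed.

End RangeSets.

Section PreservingMaps.
Variables (R : realType) (V : lmodType R[i]) (ip : V -> V -> R[i]).
Hypothesis hI : is_inner_product ip.
Hypothesis hC : complete_ip ip.
Local Notation BH := (BH ip).
Variables (phi g : BH -> BH).
Hypothesis phiK : cancel g phi.
Hypothesis hD : preserves_douglas_both phi.

(* [phi] preserves and, being onto, reflects Douglas solvability *)
Lemma solvable_phi A B : douglas_solvable A B <-> douglas_solvable (phi A) (phi B).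
Proof.
split=> [[X /hD hX] | [Y hY]]; first by exists (phi X).
by exists (g Y); apply/hD; rewrite phiK.
Qed.

Lemma bottom_phi A : douglas_bottom A <-> douglas_bottom (phi A).
Proof.
split=> h B; last by apply/solvable_phi; apply: h.
by rewrite -(phiK B); apply/(solvable_phi A); apply: h.
Qed.

(* [phi] is an automorphism of the preorder, so it preserves its atoms *)
Lemma atom_phi A : douglas_atom A <-> douglas_atom (phi A).
Proof.
split=> [[nA hA] | [nA hA]]; split.
- by move=> /(bottom_phi A) /nA.
- move=> S; rewrite -(phiK S) => /(solvable_phi (g S) A) /hA.
  by case=> [/(bottom_phi (g S)) | /(solvable_phi A (g S))]; [left | right].
- by move=> /(bottom_phi A) /nA.
- move=> S /(solvable_phi S A) /hA.
  by case=> [/(bottom_phi S) | /(solvable_phi A S)]; [left | right].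
Qed.

(* range inclusion, being detected by atoms, is preserved both ways *)
Lemma ran_sub_phi A B : ran_sub A B <-> ran_sub (phi A) (phi B).
Proof.
rewrite !(ran_sub_atoms hI hC); split=> h Q.
  by rewrite -(phiK Q) -!solvable_phi -atom_phi; apply: h.
by rewrite atom_phi !(solvable_phi Q); apply: h.
Qed.

(* rank-one operators are the atoms, so they are preserved both ways *)
Lemma rank_one_phi A : rank_one A <-> rank_one (phi A).
Proof.
split=> /(rank_one_atom hI hC) hA; apply: (atom_rank_one hI hC).
  exact: (proj1 (atom_phi A) hA).
exact: (proj2 (atom_phi A) hA).
Qed.

Lemma same_ran_phi A A' : same_set (ran A) (ran A') <-> same_set (ran (phi A)) (ran (phi A')).
Proof. by rewrite !same_ran_sub (ran_sub_phi A A') (ran_sub_phi A' A). Qed.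

Lemma line_image L : is_line L -> exists L', is_line L' /\ maps_subspace phi L L'.
Proof.
move=> /(line_is_range hI) [A [hA rA]].
exists (ran (phi A)); split; first exact: (proj1 (rank_one_phi A) rA).
split=> [|A' hA']; first by exists A.
by apply/(same_ran_phi A' A); apply: same_set_trans hA' (same_set_sym hA).
Qed.

Lemma line_preimage L' : is_line L' -> exists L, is_line L /\ maps_subspace phi L L'.
Proof.
move=> /(line_is_range hI) [A' [hA' rA']].
exists (ran (g A')); split; first by apply/rank_one_phi; rewrite phiK.
split=> [|A hA]; first by exists (g A').
by apply: (same_set_trans _ hA'); rewrite -(phiK A'); apply/(same_ran_phi A (g A')).
Qed.

Lemma line_image_inj L1 L2 L' :
  maps_subspace phi L1 L' -> maps_subspace phi L2 L' -> same_set L1 L2.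
Proof.
move=> [[A1 h1] m1] [[A2 h2] m2].
have /(same_ran_phi A1 A2) h12 := same_set_trans (m1 _ h1) (same_set_sym (m2 _ h2)).
exact: same_set_trans (same_set_sym h1) (same_set_trans h12 h2).
Qed.

End PreservingMaps.

Theorem mainTheorem6 (R : realType) (V : lmodType R[i]) (ip : V -> V -> R[i])
  (hH : is_hilbert_space ip) (phi : BH ip -> BH ip)
  (hbij : bijective phi) (hD : preserves_douglas_both phi) :
  (forall A B : BH ip, ran_sub A B <-> ran_sub (phi A) (phi B)) /\
  (forall B : BH ip, rank_one B -> rank_one (phi B)) /\
  (forall A A' : BH ip, same_set (ran A) (ran A') ->
     same_set (ran (phi A)) (ran (phi A'))) /\
  (forall L : V -> Prop, is_line L ->
     exists L' : V -> Prop, is_line L' /\ maps_subspace phi L L') /\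
  (forall L' : V -> Prop, is_line L' ->
     exists L : V -> Prop, is_line L /\ maps_subspace phi L L') /\
  (forall L1 L2 L' : V -> Prop, is_line L1 -> is_line L2 ->
     maps_subspace phi L1 L' -> maps_subspace phi L2 L' -> same_set L1 L2).
Proof.
case: hH => hI hC _; case: hbij => g _ phiK.
split; first exact (ran_sub_phi hI hC phiK hD).
split; first by move=> B /(rank_one_phi hI hC phiK hD).
split; first by move=> A A' /(same_ran_phi hI hC phiK hD).
split; first exact (line_image hI hC phiK hD).
split; first exact (line_preimage hI hC phiK hD).
by move=> L1 L2 L' _ _ h1 h2; exact: (line_image_inj hI hC phiK hD h1 h2).
Qed.
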